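(* Assume (H1) and (H2). Then, as $z\to\infty$: (i) $q(z)\,|\mathfrak m'(z)|=2q(z)e^{\gamma(z)}\int_z^\infty e^{-\gamma(\xi)}d\xi\to1$; (ii) $\mathfrak m(z)/M(z)\to1$, where $M(z)=\int_z^\infty dy/q(y)$ (finite for large $z$); (iii) $\dfrac{\int_z^\infty e^{\gamma(y)}\big(\int_y^\infty e^{-\gamma(\xi)}d\xi\big)^2dy}{e^{2\gamma(z)}\big(\int_z^\infty e^{-\gamma(\xi)}d\xi\big)^3}\to1$; (iv) $\dfrac{8\int_z^\infty e^{\gamma(y)}\int_y^\infty e^{\gamma(\eta)}\big(\int_\eta^\infty e^{-\gamma(\xi)}d\xi\big)^2d\eta\,dy}{\int_z^\infty q(y)^{-3}dy}\to1$.
   Context: Let $q\in C^1([0,\infty))$ and $\gamma(y)=2\int_0^yq$. (H1): $\int_0^\infty e^{\gamma(y)}\int_y^\infty e^{-\gamma(\xi)}d\xi\,dy<\infty$. (H2): $\lim_{x\to\infty}q(x)=\infty$ and $\lim_{x\to\infty}q'(x)/q(x)^2=0$. $\mathfrak m(z)=2\int_z^\infty e^{\gamma(y)}\int_y^\infty e^{-\gamma(\xi)}d\xi\,dy$, so $\mathfrak m'(z)=-2e^{\gamma(z)}\int_z^\infty e^{-\gamma(\xi)}d\xi$. *)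

From Stdlib Require Import Reals Lra Classical ClassicalEpsilon.
Open Scope R_scope.

Definition is_RInt (f : R -> R) (a b v : R) : Prop :=
  exists pr : Riemann_integrable f a b, RiemannInt pr = v.

(* The Riemann integral of f over [a,b] (0 if f is not Riemann integrable). *)
Definition Rint (f : R -> R) (a b : R) : R :=
  match excluded_middle_informative (exists v, is_RInt f a b v) with
  | left H => proj1_sig (constructive_indefinite_description _ H)
  | right _ => 0
  end.

Definition lim_infty (g : R -> R) (l : R) : Prop :=
  forall eps, 0 < eps -> exists A, forall x, A <= x -> Rabs (g x - l) < eps.

Definition tends_pinfty (g : R -> R) : Prop :=
  forall B, exists A, forall x, A <= x -> B <= g x.

Definition is_ImpInt (f : R -> R) (a l : R) : Prop :=
  (forall b, a <= b -> inhabited (Riemann_integrable f a b)) /\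
  lim_infty (fun b => Rint f a b) l.

Definition ImpInt_conv (f : R -> R) (a : R) : Prop := exists l, is_ImpInt f a l.

(* \int_a^\infty f (0 if it does not converge). *)
Definition ImpInt (f : R -> R) (a : R) : R :=
  match excluded_middle_informative (ImpInt_conv f a) with
  | left H => proj1_sig (constructive_indefinite_description _ H)
  | right _ => 0
  end.

Definition cont_nonneg (f : R -> R) (x : R) : Prop :=
  forall eps, 0 < eps -> exists delta, 0 < delta /\
    forall y, 0 <= y -> Rabs (y - x) < delta -> Rabs (f y - f x) < eps.

Definition C1_nonneg (q dq : R -> R) : Prop :=
  (forall x, 0 < x -> derivable_pt_lim q x (dq x)) /\
  (forall eps, 0 < eps -> exists delta, 0 < delta /\
     forall h, 0 < h < delta -> Rabs ((q h - q 0) / h - dq 0) < eps) /\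
  (forall x, 0 <= x -> cont_nonneg q x) /\
  (forall x, 0 <= x -> cont_nonneg dq x).

Definition gam (q : R -> R) (y : R) : R := 2 * Rint q 0 y.

Definition Itail (q : R -> R) (y : R) : R :=
  ImpInt (fun xi => exp (- gam q xi)) y.

Definition mfrak (q : R -> R) (z : R) : R :=
  2 * ImpInt (fun y => exp (gam q y) * Itail q y) z.

Definition Mfun (q : R -> R) (z : R) : R := ImpInt (fun y => / q y) z.

Definition Jtail (q : R -> R) (z : R) : R :=
  ImpInt (fun y => exp (gam q y) * (Itail q y) ^ 2) z.

From Stdlib Require Import Reals Lra Classical ClassicalEpsilon.
From Coquelicot Require Import Coquelicot.
Open Scope R_scope.

(* All four limits are instances of a tail form of l'Hospital's rule: if [f / g -> c] with
   [g > 0] integrable at infinity, then [f] is integrable too and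
   [\int_z^oo f / \int_z^oo g -> c].  With [I(y) = \int_y^oo e^-gamma] and
   [kappa = 2 q e^gamma I]:
   (i)   [-(e^-gamma / (2q))' = e^-gamma (1 + q' / (2 q^2))], which is [~ e^-gamma] by (H2),
         so [I ~ e^-gamma / (2q)], i.e. [kappa -> 1];
   (ii)  [e^gamma I = kappa / (2q) ~ 1 / (2q)];
   (iii) [-(e^(2 gamma) I^3)' = e^gamma I^2 (3 - 2 kappa) ~ e^gamma I^2];
   (iv)  by (iii) and (i), [e^gamma J ~ e^(3 gamma) I^3 = kappa^3 / (8 q^3) ~ 1 / (8 q^3)]. *)

(** * Limits at infinity *)

Lemma lim_infty_is_lim g l : lim_infty g l <-> is_lim g p_infty l.
Proof.
  rewrite <- is_lim_spec. split.
  - intros H eps. destruct (H eps (cond_pos eps)) as [A HA].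
    exists A. intros x Hx. apply HA. lra.
  - intros H eps Heps. destruct (H (mkposreal eps Heps)) as [A HA].
    exists (A + 1). intros x Hx. apply HA. lra.
Qed.

Lemma tends_pinfty_is_lim g : tends_pinfty g -> is_lim g p_infty p_infty.
Proof.
  intros H. rewrite <- is_lim_spec. intros M.
  destruct (H (M + 1)) as [A HA]. exists A. intros x Hx.
  specialize (HA x). lra.
Qed.

Lemma is_lim_eventually_close f (l eps : R) : is_lim f p_infty (Finite l) -> 0 < eps ->
  Rbar_locally p_infty (fun x => Rabs (f x - l) < eps).
Proof. intros H Heps. apply is_lim_spec in H. exact (H (mkposreal eps Heps)). Qed.

Lemma eventually_forall_ge (P : R -> Prop) : Rbar_locally p_infty P ->
  Rbar_locally p_infty (fun z => forall x, z <= x -> P x).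
Proof. intros [M HM]. exists M. intros z Hz x Hx. apply HM. lra. Qed.

Lemma eventually_exists_ge (P : R -> Prop) : Rbar_locally p_infty P ->
  exists z0, forall z, z0 <= z -> P z.
Proof. intros [M HM]. exists (M + 1). intros z Hz. apply HM. lra. Qed.

Lemma is_lim_plus_fin f g (a b l : R) : is_lim f p_infty a -> is_lim g p_infty b -> a + b = l ->
  is_lim (fun x => f x + g x) p_infty l.
Proof. intros Hf Hg <-. exact (is_lim_plus f g p_infty a b (a + b) Hf Hg eq_refl). Qed.

Lemma is_lim_minus_fin f g (a b l : R) : is_lim f p_infty a -> is_lim g p_infty b -> a - b = l ->
  is_lim (fun x => f x - g x) p_infty l.
Proof. intros Hf Hg <-. exact (is_lim_minus f g p_infty a b (a - b) Hf Hg eq_refl). Qed.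

Lemma is_lim_mult_fin f g (a b l : R) : is_lim f p_infty a -> is_lim g p_infty b -> a * b = l ->
  is_lim (fun x => f x * g x) p_infty l.
Proof. intros Hf Hg <-. exact (is_lim_mult f g p_infty a b Hf Hg I). Qed.

Lemma is_lim_inv_fin f (a l : R) : is_lim f p_infty a -> a <> 0 -> / a = l ->
  is_lim (fun x => / f x) p_infty l.
Proof.
  intros Hf Ha <-. apply (is_lim_inv f p_infty a Hf). intros E. apply Ha. now injection E.
Qed.

Lemma exp_double x : exp (2 * x) = exp x * exp x.
Proof. rewrite <- exp_plus. f_equal. ring. Qed.

Lemma ball_R x (e : posreal) y : ball x e y -> x - e < y < x + e.
Proof.
  intros Hy. unfold ball in Hy; simpl in Hy.
  unfold AbsRing_ball, abs, minus, plus, opp in Hy; simpl in Hy.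
  apply Rabs_lt_between in Hy. lra.
Qed.

Lemma continuous_multR (f g : R -> R) x :
  continuous f x -> continuous g x -> continuous (fun y => f y * g y) x.
Proof. intros. exact (continuous_mult (K:=R_AbsRing) f g x H H0). Qed.

Lemma continuous_plusR (f g : R -> R) x :
  continuous f x -> continuous g x -> continuous (fun y => f y + g y) x.
Proof. intros. exact (continuous_plus (V:=R_NormedModule) f g x H H0). Qed.

Lemma ex_derive_continuousR (f : R -> R) x : ex_derive f x -> continuous f x.
Proof. apply (ex_derive_continuous (K:=R_AbsRing) (V:=R_NormedModule)). Qed.

Lemma cont_nonneg_continuous f x : cont_nonneg f x -> 0 < x -> continuous f x.
Proof.
  intros H Hx. apply filterlim_locally. intros eps.
  destruct (H eps (cond_pos eps)) as [d [Hd Hd']].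
  exists (mkposreal (Rmin d x) (Rmin_pos d x Hd Hx)). intros y Hy.
  apply ball_R in Hy. simpl in Hy. generalize (Rmin_l d x) (Rmin_r d x); intros.
  unfold ball; simpl. unfold AbsRing_ball, abs, minus, plus, opp; simpl.
  apply Hd'; [lra|]. apply Rabs_lt_between. lra.
Qed.

(** * Improper integrals *)

Lemma Rint_RInt f a b : ex_RInt f a b -> Rint f a b = RInt f a b.
Proof.
  intros H. set (pr := ex_RInt_Reals_0 f a b H).
  rewrite (RInt_Reals f a b pr). unfold Rint.
  destruct excluded_middle_informative as [Hv|Hv].
  - destruct constructive_indefinite_description as [v [pr' <-]]. apply RiemannInt_P5.
  - exfalso. apply Hv. exists (RiemannInt pr), pr. reflexivity.
Qed.

Lemma ex_RInt_continuous_ge (f : R -> R) a b :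
  (forall x, a <= x -> continuous f x) -> a <= b -> ex_RInt f a b.
Proof.
  intros Hc Hab. apply (ex_RInt_continuous (V:=R_CompleteNormedModule)). intros z Hz.
  apply Hc. rewrite Rmin_left in Hz; lra.
Qed.

Definition is_RInt_infty (f : R -> R) (a l : R) : Prop :=
  (forall b, a <= b -> ex_RInt f a b) /\ is_lim (fun b => RInt f a b) p_infty l.

Lemma is_ImpInt_iff f a l : is_ImpInt f a l <-> is_RInt_infty f a l.
Proof.
  unfold is_ImpInt, is_RInt_infty. rewrite lim_infty_is_lim.
  assert (Hex : (forall b, a <= b -> inhabited (Riemann_integrable f a b)) <->
                (forall b, a <= b -> ex_RInt f a b)).
  { split; intros H b Hb.
    - destruct (H b Hb) as [pr]. now apply ex_RInt_Reals_1.
    - constructor. now apply ex_RInt_Reals_0, H. }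
  rewrite Hex. split; intros [He Hl]; split; auto; (eapply is_lim_ext_loc; [|exact Hl]);
    exists a; intros b Hb; [|symmetry]; apply Rint_RInt, He; lra.
Qed.

Lemma ImpInt_eq f a l : is_RInt_infty f a l -> ImpInt f a = l.
Proof.
  intros H. apply is_ImpInt_iff in H. unfold ImpInt.
  destruct excluded_middle_informative as [Hc|Hc].
  - destruct constructive_indefinite_description as [v Hv]; simpl.
    destruct Hv as [_ Hv]. destruct H as [_ Hl].
    apply lim_infty_is_lim, is_lim_unique in Hv. apply lim_infty_is_lim, is_lim_unique in Hl.
    rewrite Hv in Hl. now injection Hl.
  - exfalso. apply Hc. now exists l.
Qed.

Lemma ImpInt_conv_is_RInt_infty f a : ImpInt_conv f a -> is_RInt_infty f a (ImpInt f a).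
Proof. intros [l Hl]. apply is_ImpInt_iff in Hl. now rewrite (ImpInt_eq f a l Hl). Qed.

Lemma is_RInt_infty_ImpInt_conv f a l : is_RInt_infty f a l -> ImpInt_conv f a.
Proof. intros H. exists l. now apply is_ImpInt_iff. Qed.

Lemma is_RInt_infty_Chasles f a z l : is_RInt_infty f a l -> a <= z ->
  is_RInt_infty f z (l - RInt f a z).
Proof.
  intros [He Hl] Hz.
  assert (Hez : forall b, z <= b -> ex_RInt f z b).
  { intros b Hb. apply (ex_RInt_Chasles_2 f a); [lra | apply He; lra]. }
  split; [exact Hez|].
  apply (is_lim_ext_loc (fun b => RInt f a b - RInt f a z)).
  - exists z. intros b Hb. rewrite <- (RInt_Chasles f a z b (He z Hz) (Hez b ltac:(lra))).
    unfold plus; simpl. ring.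
  - apply (is_lim_minus_fin _ _ l (RInt f a z)); [exact Hl | apply is_lim_const | reflexivity].
Qed.

Lemma ImpInt_conv_eventually f a : ImpInt_conv f a -> Rbar_locally p_infty (ImpInt_conv f).
Proof.
  intros H. exists a. intros z Hz.
  apply (is_RInt_infty_ImpInt_conv f z (ImpInt f a - RInt f a z)).
  apply is_RInt_infty_Chasles; [now apply ImpInt_conv_is_RInt_infty | lra].
Qed.

Lemma is_RInt_infty_le f g a lf lg : (forall x, a <= x -> f x <= g x) ->
  is_RInt_infty f a lf -> is_RInt_infty g a lg -> lf <= lg.
Proof.
  intros Hfg [Hef Hlf] [Heg Hlg].
  assert (H := is_lim_le_loc (fun b => RInt f a b) (fun b => RInt g a b) p_infty lf lg).
  apply H; auto.
  exists a. intros b Hb. apply RInt_le; [lra | apply Hef | apply Heg | intros; apply Hfg]; lra.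
Qed.

Lemma is_RInt_infty_ge0 f a l : (forall x, a <= x -> 0 <= f x) -> is_RInt_infty f a l -> 0 <= l.
Proof.
  intros Hf [He Hl].
  assert (H := is_lim_le_loc (fun _ => 0) (fun b => RInt f a b) p_infty 0 l).
  apply H; [|apply is_lim_const | exact Hl].
  exists a. intros b Hb. apply RInt_ge_0; [lra | apply He; lra | intros; apply Hf; lra].
Qed.

Lemma is_RInt_infty_gt0 f a l : (forall x, a <= x -> continuous f x) ->
  (forall x, a <= x -> 0 < f x) -> is_RInt_infty f a l -> 0 < l.
Proof.
  intros Hc Hf H.
  assert (Htail := is_RInt_infty_Chasles f a (a + 1) l H ltac:(lra)).
  apply is_RInt_infty_ge0 in Htail; [|intros; apply Rlt_le, Hf; lra].
  assert (0 < RInt f a (a + 1)); [|lra].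
  apply RInt_gt_0; [lra | intros; apply Hf; lra | intros; apply Hc; lra].
Qed.

Lemma is_RInt_infty_scal f a k l : is_RInt_infty f a l ->
  is_RInt_infty (fun x => k * f x) a (k * l).
Proof.
  intros [He Hl]. split.
  - intros b Hb. exact (ex_RInt_scal (V:=R_NormedModule) f a b k (He b Hb)).
  - apply (is_lim_ext_loc (fun b => k * RInt f a b)).
    + exists a. intros b Hb. symmetry. exact (RInt_scal (V:=R_CompleteNormedModule) f a b k (He b ltac:(lra))).
    + apply (is_lim_mult_fin _ _ k l); [apply is_lim_const | exact Hl | reflexivity].
Qed.

Lemma ImpInt_lim_0 f a : ImpInt_conv f a -> is_lim (ImpInt f) p_infty 0.
Proof.
  intros Hconv. pose proof (ImpInt_conv_is_RInt_infty f a Hconv) as H.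
  apply (is_lim_ext_loc (fun z => ImpInt f a - RInt f a z)).
  - exists a. intros z Hz. symmetry. apply ImpInt_eq, is_RInt_infty_Chasles; [exact H | lra].
  - apply (is_lim_minus_fin _ _ (ImpInt f a) (ImpInt f a));
      [apply is_lim_const | exact (proj2 H) | ring].
Qed.

Lemma is_derive_ImpInt f a x : ImpInt_conv f a -> a < x -> continuous f x ->
  is_derive (ImpInt f) x (- f x).
Proof.
  intros Hconv Hx Hc. pose proof (ImpInt_conv_is_RInt_infty f a Hconv) as H.
  set (d := mkposreal (x - a) ltac:(lra)).
  apply (is_derive_ext_loc (fun z => ImpInt f a - RInt f a z)).
  - exists d. intros y Hy. apply ball_R in Hy. simpl in Hy.
    symmetry. apply ImpInt_eq, is_RInt_infty_Chasles; [exact H | lra].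
  - replace (- f x) with (0 - f x) by ring.
    apply (is_derive_minus (fun _ => ImpInt f a)); [apply is_derive_Reals, derivable_pt_lim_const|].
    apply (is_derive_RInt f (fun b => RInt f a b) a x); [|exact Hc].
    exists d. intros y Hy. apply ball_R in Hy. simpl in Hy.
    apply (RInt_correct (V:=R_CompleteNormedModule)), (proj1 H). lra.
Qed.

Lemma is_derive_ImpInt_eventually f : Rbar_locally p_infty (ImpInt_conv f) ->
  Rbar_locally p_infty (fun x => continuous f x -> is_derive (ImpInt f) x (- f x)).
Proof.
  intros [M HM]. exists (M + 1). intros x Hx. apply (is_derive_ImpInt f (M + 1 / 2)); [|lra].
  apply HM. lra.
Qed.

Lemma RInt_nondecreasing (f : R -> R) a b0 b : (forall x, a <= x -> 0 <= f x) ->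
  (forall b, a <= b -> ex_RInt f a b) -> a <= b0 <= b -> RInt f a b0 <= RInt f a b.
Proof.
  intros Hf He Hb.
  assert (Hb0b : ex_RInt f b0 b) by (apply (ex_RInt_Chasles_2 f a); [lra | apply He; lra]).
  rewrite <- (RInt_Chasles f a b0 b (He b0 ltac:(lra)) Hb0b). unfold plus; simpl.
  assert (0 <= RInt f b0 b); [|lra].
  apply RInt_ge_0; [lra | exact Hb0b | intros; apply Hf; lra].
Qed.

(* The partial integrals of [f] increase and are bounded, so they converge to their supremum. *)
Lemma ImpInt_conv_le f g a : (forall x, a <= x -> continuous f x) ->
  (forall x, a <= x -> 0 <= f x <= g x) -> ImpInt_conv g a -> ImpInt_conv f a.
Proof.
  intros Hc Hfg Hg. apply ImpInt_conv_is_RInt_infty in Hg.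
  assert (He : forall b, a <= b -> ex_RInt f a b) by (intros; now apply ex_RInt_continuous_ge).
  set (E := fun y => exists b, a <= b /\ y = RInt f a b).
  assert (HE : bound E).
  { exists (ImpInt g a). intros y [b [Hab ->]].
    apply Rle_trans with (RInt g a b).
    - apply RInt_le; [lra | apply He; lra | apply (proj1 Hg); lra | intros; apply Hfg; lra].
    - apply Rle_trans with (ImpInt g a - 0); [|lra].
      assert (Htail := is_RInt_infty_Chasles g a b _ Hg Hab).
      apply is_RInt_infty_ge0 in Htail; [lra|]. intros x Hx. destruct (Hfg x); lra. }
  destruct (completeness E HE (ex_intro _ (RInt f a a) (ex_intro _ a (conj (Rle_refl a) eq_refl))))
    as [m [Hub Hlub]].
  exists m. apply is_ImpInt_iff. split; [exact He|].
  apply is_lim_spec. intros eps.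
  assert (Hb0 : exists b0, a <= b0 /\ m - eps < RInt f a b0).
  { apply NNPP. intros Hn. assert (m <= m - eps); [|destruct eps; simpl in *; lra].
    apply Hlub. intros y [b [Hab ->]]. apply Rnot_lt_le. intros Hl. apply Hn. now exists b. }
  destruct Hb0 as [b0 [Hab0 Hb0]]. exists b0. intros x Hx.
  assert (RInt f a b0 <= RInt f a x)
    by (apply RInt_nondecreasing; [intros; apply Hfg | | ]; auto; lra).
  assert (RInt f a x <= m) by (apply Hub; exists x; split; auto; lra).
  apply Rabs_lt_between. destruct eps; simpl in *; lra.
Qed.

Lemma is_RInt_infty_antiderivative (g G : R -> R) a : (forall x, a <= x -> continuous g x) ->
  (forall x, a <= x -> is_derive G x (- g x)) -> is_lim G p_infty 0 ->
  is_RInt_infty g a (G a).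
Proof.
  intros Hc HG HG0. split; [intros; now apply ex_RInt_continuous_ge|].
  apply (is_lim_ext_loc (fun b => G a - G b)).
  - exists a. intros b Hb. symmetry. apply is_RInt_unique.
    replace (G a - G b) with (minus (- G b) (- G a)) by (unfold minus, plus, opp; simpl; ring).
    apply (is_RInt_derive (V:=R_CompleteNormedModule) (fun x => - G x) g);
      intros x Hx; rewrite Rmin_left, Rmax_right in Hx by lra.
    + apply is_derive_Reals. replace (g x) with (- - g x) by ring.
      apply derivable_pt_lim_opp, is_derive_Reals, HG. lra.
    + apply Hc. lra.
  - apply (is_lim_minus_fin _ _ (G a) 0); [apply is_lim_const | exact HG0 | ring].
Qed.

Lemma ratio_bounds u v c e : 0 < v -> Rabs (u / v - c) < e ->
  (c - e) * v <= u <= (c + e) * v.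
Proof.
  intros Hv Hr. apply Rabs_lt_between in Hr.
  replace u with (u / v * v) by (field; lra). split; apply Rmult_le_compat_r; lra.
Qed.

Lemma ImpInt_le_scal f g z k1 k2 : ImpInt_conv f z -> ImpInt_conv g z ->
  (forall x, z <= x -> k1 * g x <= f x <= k2 * g x) ->
  k1 * ImpInt g z <= ImpInt f z <= k2 * ImpInt g z.
Proof.
  intros Hf Hg Hb. apply ImpInt_conv_is_RInt_infty in Hf, Hg. split.
  - apply (is_RInt_infty_le (fun x => k1 * g x) f z); auto using is_RInt_infty_scal.
    intros x Hx. apply Hb, Hx.
  - apply (is_RInt_infty_le f (fun x => k2 * g x) z); auto using is_RInt_infty_scal.
    intros x Hx. apply Hb, Hx.
Qed.

Lemma ImpInt_conv_of_ratio f g (c : R) :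
  Rbar_locally p_infty (fun x => continuous f x /\ 0 <= f x /\ 0 < g x) ->
  Rbar_locally p_infty (ImpInt_conv g) -> is_lim (fun x => f x / g x) p_infty c ->
  Rbar_locally p_infty (ImpInt_conv f).
Proof.
  intros Hreg Hg Hfg.
  generalize (filter_and _ _ (eventually_forall_ge _
    (filter_and _ _ Hreg (is_lim_eventually_close _ _ 1 Hfg Rlt_0_1))) Hg).
  apply filter_imp. intros z [Hz Hgz].
  apply (ImpInt_conv_le f (fun x => (Rabs c + 1) * g x)).
  - intros x Hx. apply (Hz x Hx).
  - intros x Hx. destruct (Hz x Hx) as [[_ [Hf Hgx]] Hr]. split; [exact Hf|].
    apply ratio_bounds in Hr; [|exact Hgx]. generalize (Rle_abs c). nra.
  - apply is_RInt_infty_ImpInt_conv with ((Rabs c + 1) * ImpInt g z).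
    apply is_RInt_infty_scal, ImpInt_conv_is_RInt_infty, Hgz.
Qed.

(* Integrate [f = (c + o(1)) g] over [z, oo). *)
Lemma ImpInt_ratio_lim f g (c : R) :
  Rbar_locally p_infty (fun x => continuous f x /\ continuous g x /\ 0 <= f x /\ 0 < g x) ->
  Rbar_locally p_infty (ImpInt_conv g) -> is_lim (fun x => f x / g x) p_infty c ->
  Rbar_locally p_infty (ImpInt_conv f) /\
  is_lim (fun z => ImpInt f z / ImpInt g z) p_infty c.
Proof.
  intros Hreg Hg Hfg.
  assert (Hf : Rbar_locally p_infty (ImpInt_conv f)).
  { apply (ImpInt_conv_of_ratio f g c); auto. generalize Hreg. apply filter_imp. tauto. }
  split; [exact Hf|]. apply is_lim_spec. intros eps.
  assert (He : 0 < eps / 2) by (destruct eps; simpl; lra).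
  generalize (filter_and _ _ (eventually_forall_ge _
    (filter_and _ _ Hreg (is_lim_eventually_close _ _ _ Hfg He))) (filter_and _ _ Hf Hg)).
  apply filter_imp. intros z [Hz [Hfz Hgz]].
  assert (HG : 0 < ImpInt g z).
  { apply (is_RInt_infty_gt0 g z); [intros x Hx; apply (Hz x Hx) | intros x Hx; apply (Hz x Hx) |].
    now apply ImpInt_conv_is_RInt_infty. }
  destruct (ImpInt_le_scal f g z (c - eps / 2) (c + eps / 2) Hfz Hgz) as [Hlo Hhi].
  { intros x Hx. destruct (Hz x Hx) as [[_ [_ [_ Hgx]]] Hr]. now apply ratio_bounds. }
  assert (HF : ImpInt f z = ImpInt f z / ImpInt g z * ImpInt g z) by (field; lra).
  rewrite HF in Hlo, Hhi.
  apply Rmult_le_reg_r in Hlo; [|exact HG]. apply Rmult_le_reg_r in Hhi; [|exact HG].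
  apply Rabs_lt_between. destruct eps; simpl in *; lra.
Qed.

Lemma ImpInt_ratio_antiderivative_lim (f g G : R -> R) (c : R) :
  Rbar_locally p_infty (fun x => continuous f x /\ continuous g x /\ 0 <= f x /\ 0 < g x /\
                                 is_derive G x (- g x)) ->
  is_lim G p_infty 0 -> is_lim (fun x => f x / g x) p_infty c ->
  Rbar_locally p_infty (ImpInt_conv f) /\ is_lim (fun z => ImpInt f z / G z) p_infty c.
Proof.
  intros Hreg HG0 Hfg.
  assert (HgG : Rbar_locally p_infty (fun z => is_RInt_infty g z (G z))).
  { generalize (eventually_forall_ge _ Hreg). apply filter_imp. intros z Hz.
    apply is_RInt_infty_antiderivative; [intros x Hx; apply (Hz x Hx) ..| exact HG0]. }
  destruct (ImpInt_ratio_lim f g c) as [Hf Hlim]; [| |exact Hfg|].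
  - generalize Hreg. apply filter_imp. tauto.
  - generalize HgG. apply filter_imp. intros z. apply is_RInt_infty_ImpInt_conv.
  - split; [exact Hf|]. refine (is_lim_ext_loc _ _ _ _ _ Hlim).
    generalize HgG. apply filter_imp. intros z Hz. now rewrite (ImpInt_eq g z (G z) Hz).
Qed.

(** * Asymptotics of the tails *)

Section Tails.

Variables q dq : R -> R.
Hypothesis q_C1 : C1_nonneg q dq.
Hypothesis Itail_conv : forall y, 0 <= y -> ImpInt_conv (fun xi => exp (- gam q xi)) y.
Hypothesis mfrak_conv : ImpInt_conv (fun y => exp (gam q y) * Itail q y) 0.
Hypothesis q_pinfty : tends_pinfty q.
Hypothesis dq_q2_lim : lim_infty (fun x => dq x / q x ^ 2) 0.

(* Extended by [q 0] to the left of 0, [q] is continuous on all of [R], as Coquelicot's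
   fundamental theorem of calculus requires at the endpoint 0. *)
Let qext x := q (Rmax 0 x).

Lemma continuous_qext x : continuous qext x.
Proof.
  destruct q_C1 as [_ [_ [Hq _]]]. apply filterlim_locally. intros eps.
  destruct (Hq (Rmax 0 x) (Rmax_l 0 x) eps (cond_pos eps)) as [d [Hd Hd']].
  exists (mkposreal d Hd). intros y Hy. apply ball_R in Hy. simpl in Hy.
  unfold ball; simpl. unfold AbsRing_ball, abs, minus, plus, opp; simpl. unfold qext.
  apply Hd'; [apply Rmax_l|]. apply Rabs_lt_between.
  unfold Rmax; destruct Rle_dec; destruct Rle_dec; lra.
Qed.

Lemma gam_derive x : 0 < x -> is_derive (gam q) x (2 * q x).
Proof.
  intros Hx. apply (is_derive_ext_loc (fun y => 2 * RInt qext 0 y)).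
  - exists (mkposreal x Hx). intros y Hy. apply ball_R in Hy. simpl in Hy.
    assert (Hext : forall t, Rmin 0 y <= t <= Rmax 0 y -> qext t = q t).
    { intros t Ht. rewrite Rmin_left, Rmax_right in Ht by lra.
      unfold qext. now rewrite Rmax_right by lra. }
    assert (He : ex_RInt qext 0 y) by (apply ex_RInt_continuous_ge; [intros; apply continuous_qext | lra]).
    unfold gam. rewrite Rint_RInt.
    + f_equal. apply RInt_ext. intros t Ht. apply Hext. lra.
    + apply (ex_RInt_ext qext); [intros t Ht; apply Hext; lra | exact He].
  - apply is_derive_Reals, derivable_pt_lim_scal, is_derive_Reals.
    replace (q x) with (qext x) by (unfold qext; now rewrite Rmax_right by lra).
    apply (is_derive_RInt qext (fun b => RInt qext 0 b) 0 x); [|apply continuous_qext].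
    exists (mkposreal 1 Rlt_0_1). intros y _. apply (RInt_correct (V:=R_CompleteNormedModule)).
    apply (ex_RInt_continuous (V:=R_CompleteNormedModule)). intros; apply continuous_qext.
Qed.

Lemma q_derive x : 0 < x -> is_derive q x (dq x).
Proof. intros Hx. apply is_derive_Reals, (proj1 q_C1), Hx. Qed.

Lemma dq_continuous x : 0 < x -> continuous dq x.
Proof.
  intros Hx. apply cont_nonneg_continuous; [|exact Hx].
  apply (proj2 (proj2 (proj2 q_C1)) x). lra.
Qed.

Lemma continuous_exp_neg_gam x : 0 < x -> continuous (fun y => exp (- gam q y)) x.
Proof.
  intros Hx. apply ex_derive_continuousR. auto_derive. eexists. now apply gam_derive.
Qed.

Lemma Itail_derive x : 0 < x -> is_derive (Itail q) x (- exp (- gam q x)).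
Proof.
  intros Hx. apply (is_derive_ImpInt (fun xi => exp (- gam q xi)) 0); [| exact Hx |].
  - apply Itail_conv. lra.
  - now apply continuous_exp_neg_gam.
Qed.

Ltac derivable_atoms :=
  repeat match goal with
  | |- _ /\ _ => split
  | |- True => exact I
  | |- ex_derive (fun y => gam q y) _ => eexists; apply gam_derive; lra
  | |- ex_derive (fun y => q y) _ => eexists; apply q_derive; lra
  | |- ex_derive (fun y => Itail q y) _ => eexists; apply Itail_derive; lra
  end.

Lemma Itail_gt0 y : 0 < y -> 0 < Itail q y.
Proof.
  intros Hy. apply (is_RInt_infty_gt0 (fun xi => exp (- gam q xi)) y).
  - intros x Hx. apply continuous_exp_neg_gam. lra.
  - intros x _. apply exp_pos.
  - apply ImpInt_conv_is_RInt_infty, Itail_conv. lra.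
Qed.

Lemma Itail_lim_0 : is_lim (Itail q) p_infty 0.
Proof. apply (ImpInt_lim_0 _ 0), Itail_conv, Rle_refl. Qed.

Lemma q_large : Rbar_locally p_infty (fun x => 0 < x /\ 1 <= q x).
Proof.
  destruct (q_pinfty 1) as [A HA]. exists (Rmax 1 A). intros x Hx.
  generalize (Rmax_l 1 A) (Rmax_r 1 A). split; [lra | apply HA; lra].
Qed.

Lemma inv_q_lim_0 : is_lim (fun x => / q x) p_infty 0.
Proof. exact (is_lim_inv q p_infty p_infty (tends_pinfty_is_lim q q_pinfty) ltac:(discriminate)). Qed.

Lemma gam_increasing a x y : (forall t, a <= t -> 0 < t /\ 1 <= q t) -> a <= x < y ->
  gam q x < gam q y.
Proof.
  intros Hq Hxy. apply (incr_function_le (gam q) a p_infty (fun t => 2 * q t)); simpl; try lra.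
  - intros t Ht _. apply gam_derive, Hq, Ht.
  - intros t Ht _. destruct (Hq t Ht). lra.
Qed.

Lemma is_derive_exp_neg_gam_div_q x : 0 < x -> q x <> 0 ->
  is_derive (fun y => exp (- gam q y) / (2 * q y)) x
    (- (exp (- gam q x) * (1 + dq x / (2 * q x ^ 2)))).
Proof.
  intros Hx Hq. auto_derive; [derivable_atoms; lra|].
  (* [auto_derive] leaves the derivatives of the atoms in the eta-expanded form below. *)
  rewrite (is_derive_unique (fun y : R => gam q y) x _ (gam_derive x Hx)).
  rewrite (is_derive_unique (fun y : R => q y) x _ (q_derive x Hx)).
  field. exact Hq.
Qed.

Lemma exp_neg_gam_div_q_lim_0 : is_lim (fun x => exp (- gam q x) / (2 * q x)) p_infty 0.
Proof.
  destruct q_large as [A HA].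
  assert (Hq : forall t, A + 1 <= t -> 0 < t /\ 1 <= q t) by (intros; apply HA; lra).
  apply (is_lim_le_le_loc (fun _ => 0) (fun x => exp (- gam q (A + 1)) * / q x)).
  - exists (A + 2). intros x Hx. destruct (Hq x ltac:(lra)) as [Hx0 Hqx].
    assert (Hgam : gam q (A + 1) < gam q x) by (apply (gam_increasing (A + 1)); [exact Hq | lra]).
    assert (Hexp : exp (- gam q x) < exp (- gam q (A + 1))) by (apply exp_increasing; lra).
    split.
    + apply Rlt_le, Rdiv_lt_0_compat; [apply exp_pos | lra].
    + unfold Rdiv. rewrite Rinv_mult. apply Rmult_le_compat; try lra.
      * apply Rlt_le, exp_pos.
      * apply Rlt_le, Rmult_lt_0_compat; apply Rinv_0_lt_compat; lra.
      * rewrite <- (Rmult_1_l (/ q x)) at 2. apply Rmult_le_compat_r; [apply Rlt_le, Rinv_0_lt_compat | ]; lra.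
  - apply is_lim_const.
  - apply (is_lim_mult_fin _ _ (exp (- gam q (A + 1))) 0); [apply is_lim_const | exact inv_q_lim_0 | ring].
Qed.

(* [kappa = q |m'|] in the notation of item (i). *)
Definition kappa z := 2 * q z * exp (gam q z) * Itail q z.

Lemma q_large_dq_small :
  Rbar_locally p_infty (fun x => 0 < x /\ 1 <= q x /\ 0 < 1 + dq x / (2 * q x ^ 2)).
Proof.
  assert (Hdq := is_lim_eventually_close _ _ 1 (proj1 (lim_infty_is_lim _ _) dq_q2_lim) Rlt_0_1).
  generalize (filter_and _ _ q_large Hdq). apply filter_imp. intros x [[Hx Hqx] Hd].
  apply Rabs_lt_between in Hd. split; [exact Hx | split; [exact Hqx|]].
  replace (dq x / (2 * q x ^ 2)) with (/ 2 * (dq x / q x ^ 2)) by (field; lra). lra.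
Qed.

Lemma exp_neg_gam_ratio_lim :
  is_lim (fun x => exp (- gam q x) / (exp (- gam q x) * (1 + dq x / (2 * q x ^ 2)))) p_infty 1.
Proof.
  apply (is_lim_ext_loc (fun x => / (1 + / 2 * (dq x / q x ^ 2)))).
  - generalize q_large_dq_small. apply filter_imp. intros x [_ [Hqx Hd]].
    assert (Hq2 : 0 < 2 * q x ^ 2) by nra.
    assert (0 < 2 * q x ^ 2 + dq x).
    { replace (2 * q x ^ 2 + dq x) with (2 * q x ^ 2 * (1 + dq x / (2 * q x ^ 2))) by (field; lra).
      now apply Rmult_lt_0_compat. }
    assert (exp (- gam q x) <> 0) by apply Rgt_not_eq, exp_pos.
    field. repeat split; lra.
  - apply (is_lim_inv_fin _ 1); [|lra|field].
    apply (is_lim_plus_fin _ _ 1 0); [apply is_lim_const | | ring].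
    apply (is_lim_mult_fin _ _ (/ 2) 0); [apply is_lim_const | apply lim_infty_is_lim, dq_q2_lim | ring].
Qed.

Lemma kappa_lim_1 : is_lim kappa p_infty 1.
Proof.
  set (g := fun y => exp (- gam q y) * (1 + dq y / (2 * q y ^ 2))).
  set (G := fun y => exp (- gam q y) / (2 * q y)).
  destruct (ImpInt_ratio_antiderivative_lim (fun y => exp (- gam q y)) g G 1) as [_ Hlim].
  - generalize q_large_dq_small. apply filter_imp. intros x [Hx [Hqx Hd]].
    split; [|split; [|split; [|split]]].
    + now apply continuous_exp_neg_gam.
    + apply continuous_multR; [now apply continuous_exp_neg_gam|].
      apply continuous_plusR; [apply continuous_const|].
      apply continuous_multR; [now apply dq_continuous|].
      apply ex_derive_continuousR. auto_derive. derivable_atoms. nra.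
    + apply Rlt_le, exp_pos.
    + apply Rmult_lt_0_compat; [apply exp_pos | exact Hd].
    + apply is_derive_exp_neg_gam_div_q; lra.
  - exact exp_neg_gam_div_q_lim_0.
  - exact exp_neg_gam_ratio_lim.
  - refine (is_lim_ext_loc _ _ _ _ _ Hlim).
    generalize q_large. apply filter_imp. intros z [_ Hqz].
    unfold kappa, Itail, G. rewrite exp_Ropp.
    assert (exp (gam q z) <> 0) by apply Rgt_not_eq, exp_pos.
    field. split; lra.
Qed.

Lemma continuous_exp_gam_Itail x : 0 < x -> continuous (fun y => exp (gam q y) * Itail q y) x.
Proof. intros Hx. apply ex_derive_continuousR. auto_derive. derivable_atoms. Qed.

Lemma exp_gam_Itail_gt0 x : 0 < x -> 0 < exp (gam q x) * Itail q x.
Proof. intros Hx. apply Rmult_lt_0_compat; [apply exp_pos | now apply Itail_gt0]. Qed.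

Lemma mfrak_asymptotics : Rbar_locally p_infty (ImpInt_conv (fun y => / q y)) /\
  is_lim (fun z => mfrak q z / Mfun q z) p_infty 1.
Proof.
  set (h := fun y => exp (gam q y) * Itail q y).
  destruct (ImpInt_ratio_lim (fun y => / q y) h 2) as [HM Hlim].
  - generalize q_large. apply filter_imp. intros x [Hx Hqx].
    split; [|split; [|split]].
    + apply ex_derive_continuousR. auto_derive. derivable_atoms. lra.
    + now apply continuous_exp_gam_Itail.
    + apply Rlt_le, Rinv_0_lt_compat. lra.
    + now apply exp_gam_Itail_gt0.
  - exact (ImpInt_conv_eventually _ _ mfrak_conv).
  - apply (is_lim_ext_loc (fun x => 2 * / kappa x)).
    + generalize q_large. apply filter_imp. intros x [Hx Hqx].
      assert (exp (gam q x) <> 0) by apply Rgt_not_eq, exp_pos.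
      assert (Itail q x <> 0) by apply Rgt_not_eq, Itail_gt0, Hx.
      unfold h, kappa. field. repeat split; auto; lra.
    + apply (is_lim_mult_fin _ _ 2 1); [apply is_lim_const | | ring].
      apply (is_lim_inv_fin _ 1); [exact kappa_lim_1 | lra | field].
  - split; [exact HM|].
    apply (is_lim_ext (fun z => 2 * / (ImpInt (fun y => / q y) z / ImpInt h z))).
    + intros z. unfold mfrak, Mfun. rewrite Rinv_div. unfold h, Rdiv. ring.
    + apply (is_lim_mult_fin _ _ 2 (/ 2)); [apply is_lim_const | | field].
      apply (is_lim_inv_fin _ 2); [exact Hlim | lra | reflexivity].
Qed.

Lemma exp_gam_Itail_lim_0 : is_lim (fun z => exp (gam q z) * Itail q z) p_infty 0.
Proof.
  apply (is_lim_ext_loc (fun z => kappa z * (/ 2 * / q z))).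
  - generalize q_large. apply filter_imp. intros z [_ Hqz]. unfold kappa. field. lra.
  - apply (is_lim_mult_fin _ _ 1 0); [exact kappa_lim_1 | | ring].
    apply (is_lim_mult_fin _ _ (/ 2) 0); [apply is_lim_const | exact inv_q_lim_0 | ring].
Qed.

Lemma kappa_near_1 :
  Rbar_locally p_infty (fun x => 0 < x /\ 1 <= q x /\ 1 / 2 < kappa x < 3 / 2).
Proof.
  generalize (filter_and _ _ q_large (is_lim_eventually_close _ _ (1 / 2) kappa_lim_1 ltac:(lra))).
  apply filter_imp. intros x [[Hx Hqx] Hk]. apply Rabs_lt_between in Hk. repeat split; lra.
Qed.

Lemma is_derive_exp_2gam_Itail3 x : 0 < x ->
  is_derive (fun y => exp (2 * gam q y) * Itail q y ^ 3) x
    (- (exp (gam q x) * Itail q x ^ 2 * (3 - 2 * kappa x))).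
Proof.
  intros Hx. auto_derive; [derivable_atoms|].
  rewrite (is_derive_unique (fun y : R => gam q y) x _ (gam_derive x Hx)).
  rewrite (is_derive_unique (fun y : R => Itail q y) x _ (Itail_derive x Hx)).
  rewrite exp_double, exp_Ropp. unfold kappa.
  field. apply Rgt_not_eq, exp_pos.
Qed.

Lemma Jtail_asymptotics :
  Rbar_locally p_infty (ImpInt_conv (fun y => exp (gam q y) * Itail q y ^ 2)) /\
  is_lim (fun z => Jtail q z / (exp (2 * gam q z) * Itail q z ^ 3)) p_infty 1.
Proof.
  set (g := fun y => exp (gam q y) * Itail q y ^ 2 * (3 - 2 * kappa y)).
  apply (ImpInt_ratio_antiderivative_lim _ g _ 1).
  - generalize kappa_near_1. apply filter_imp. intros x [Hx [_ Hkx]].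
    assert (HI := Itail_gt0 x Hx).
    split; [|split; [|split; [|split]]].
    + apply ex_derive_continuousR. auto_derive. derivable_atoms.
    + apply ex_derive_continuousR. unfold g, kappa. auto_derive. derivable_atoms.
    + apply Rmult_le_pos; [apply Rlt_le, exp_pos | apply pow2_ge_0].
    + apply Rmult_lt_0_compat; [apply Rmult_lt_0_compat; [apply exp_pos | apply pow_lt, HI] | lra].
    + now apply is_derive_exp_2gam_Itail3.
  - apply (is_lim_ext (fun z => (exp (gam q z) * Itail q z) ^ 2 * Itail q z)).
    + intros z. rewrite exp_double. ring.
    + apply (is_lim_mult_fin _ _ 0 0); [|exact Itail_lim_0 | ring].
      apply (is_lim_ext (fun z => (exp (gam q z) * Itail q z) * (exp (gam q z) * Itail q z)));
        [intros z; ring|].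
      apply (is_lim_mult_fin _ _ 0 0); [exact exp_gam_Itail_lim_0 | exact exp_gam_Itail_lim_0 | ring].
  - apply (is_lim_ext_loc (fun x => / (3 - 2 * kappa x))).
    + generalize kappa_near_1. apply filter_imp. intros x [Hx [_ Hkx]].
      assert (exp (gam q x) <> 0) by apply Rgt_not_eq, exp_pos.
      assert (Itail q x <> 0) by apply Rgt_not_eq, Itail_gt0, Hx.
      unfold g. field. repeat split; auto; lra.
    + apply (is_lim_inv_fin _ 1); [| lra | field].
      apply (is_lim_minus_fin _ _ 3 2); [apply is_lim_const | | ring].
      apply (is_lim_mult_fin _ _ 2 1); [apply is_lim_const | exact kappa_lim_1 | ring].
Qed.

Lemma continuous_inv_q3 x : 0 < x -> 1 <= q x -> continuous (fun y => / q y ^ 3) x.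
Proof.
  intros Hx Hqx. apply ex_derive_continuousR. auto_derive. derivable_atoms.
  assert (0 < q x ^ 3) by (apply pow_lt; lra). simpl in *. lra.
Qed.

Lemma inv_q3_conv : Rbar_locally p_infty (ImpInt_conv (fun y => / q y ^ 3)).
Proof.
  apply (ImpInt_conv_of_ratio _ (fun y => / q y) 0).
  - generalize q_large. apply filter_imp. intros x [Hx Hqx]. split; [|split].
    + now apply continuous_inv_q3.
    + apply Rlt_le, Rinv_0_lt_compat, pow_lt. lra.
    + apply Rinv_0_lt_compat. lra.
  - exact (proj1 mfrak_asymptotics).
  - apply (is_lim_ext_loc (fun x => / q x * / q x)).
    + generalize q_large. apply filter_imp. intros x [_ Hqx]. field. lra.
    + apply (is_lim_mult_fin _ _ 0 0); [exact inv_q_lim_0 | exact inv_q_lim_0 | ring].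
Qed.

Lemma exp_gam_Jtail_ratio_lim :
  is_lim (fun x => exp (gam q x) * Jtail q x / / q x ^ 3) p_infty (/ 8).
Proof.
  apply (is_lim_ext_loc (fun x => Jtail q x / (exp (2 * gam q x) * Itail q x ^ 3) *
                                  (kappa x * (kappa x * kappa x)) * / 8)).
  - generalize q_large. apply filter_imp. intros x [Hx Hqx].
    assert (exp (gam q x) <> 0) by apply Rgt_not_eq, exp_pos.
    assert (Itail q x <> 0) by apply Rgt_not_eq, Itail_gt0, Hx.
    rewrite exp_double. unfold kappa. field. repeat split; auto; lra.
  - apply (is_lim_mult_fin _ _ 1 (/ 8)); [|apply is_lim_const | ring].
    apply (is_lim_mult_fin _ _ 1 1); [exact (proj2 Jtail_asymptotics) | | ring].
    apply (is_lim_mult_fin _ _ 1 1); [exact kappa_lim_1 | | ring].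
    apply (is_lim_mult_fin _ _ 1 1); [exact kappa_lim_1 | exact kappa_lim_1 | ring].
Qed.

Lemma exp_gam_Jtail_asymptotics :
  Rbar_locally p_infty (fun z => ImpInt_conv (fun y => / q y ^ 3) z /\
                                 ImpInt_conv (fun y => exp (gam q y) * Jtail q y) z) /\
  is_lim (fun z => 8 * ImpInt (fun y => exp (gam q y) * Jtail q y) z
                     / ImpInt (fun y => / q y ^ 3) z) p_infty 1.
Proof.
  assert (HJconv := proj1 Jtail_asymptotics).
  destruct (ImpInt_ratio_lim (fun y => exp (gam q y) * Jtail q y) (fun y => / q y ^ 3) (/ 8))
    as [Hconv Hlim].
  - generalize (filter_and _ _ (filter_and _ _ q_large (is_derive_ImpInt_eventually _ HJconv))
                  HJconv).
    apply filter_imp. intros x [[[Hx Hqx] HJ'] HJx].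
    assert (HJder : is_derive (Jtail q) x (- (exp (gam q x) * Itail q x ^ 2)))
      by (apply HJ', ex_derive_continuousR; auto_derive; derivable_atoms).
    split; [|split; [|split]].
    + apply continuous_multR.
      * apply ex_derive_continuousR. auto_derive. derivable_atoms.
      * apply ex_derive_continuousR. eexists. exact HJder.
    + now apply continuous_inv_q3.
    + apply Rmult_le_pos; [apply Rlt_le, exp_pos|].
      apply (is_RInt_infty_ge0 (fun y => exp (gam q y) * Itail q y ^ 2) x);
        [|now apply ImpInt_conv_is_RInt_infty].
      intros; apply Rmult_le_pos; [apply Rlt_le, exp_pos | apply pow2_ge_0].
    + apply Rinv_0_lt_compat, pow_lt. lra.
  - exact inv_q3_conv.
  - exact exp_gam_Jtail_ratio_lim.
  - split; [exact (filter_and _ _ inv_q3_conv Hconv)|].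
    apply (is_lim_ext (fun z => 8 * (ImpInt (fun y => exp (gam q y) * Jtail q y) z
                                      / ImpInt (fun y => / q y ^ 3) z))); [intros z; unfold Rdiv; ring|].
    apply (is_lim_mult_fin _ _ 8 (/ 8)); [apply is_lim_const | exact Hlim | field].
Qed.

End Tails.

Theorem corollaryA2 (q dq : R -> R) :
  C1_nonneg q dq ->
  (* (H1) *)
  (forall y, 0 <= y -> ImpInt_conv (fun xi => exp (- gam q xi)) y) ->
  ImpInt_conv (fun y => exp (gam q y) * Itail q y) 0 ->
  (* (H2) *)
  tends_pinfty q ->
  lim_infty (fun x => dq x / (q x) ^ 2) 0 ->
  (* (i) *)
  lim_infty (fun z => 2 * q z * exp (gam q z) * Itail q z) 1 /\
  (* (ii) *)
  (exists z0, forall z, z0 <= z -> ImpInt_conv (fun y => / q y) z) /\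
  lim_infty (fun z => mfrak q z / Mfun q z) 1 /\
  (* (iii) *)
  (exists z0, forall z, z0 <= z ->
     ImpInt_conv (fun y => exp (gam q y) * (Itail q y) ^ 2) z) /\
  lim_infty (fun z => Jtail q z / (exp (2 * gam q z) * (Itail q z) ^ 3)) 1 /\
  (* (iv) *)
  (exists z0, forall z, z0 <= z ->
     ImpInt_conv (fun y => / (q y) ^ 3) z /\
     ImpInt_conv (fun y => exp (gam q y) * Jtail q y) z) /\
  lim_infty (fun z => 8 * ImpInt (fun y => exp (gam q y) * Jtail q y) z
                       / ImpInt (fun y => / (q y) ^ 3) z) 1.
Proof.
  intros HC HI Hm Hq Hdq.
  destruct (mfrak_asymptotics q dq HC HI Hm Hq Hdq) as [HMconv HMlim].
  destruct (Jtail_asymptotics q dq HC HI Hq Hdq) as [HJconv HJlim].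
  destruct (exp_gam_Jtail_asymptotics q dq HC HI Hm Hq Hdq) as [H4conv H4lim].
  rewrite !lim_infty_is_lim.
  split; [exact (kappa_lim_1 q dq HC Hq Hdq)|].
  repeat split; solve [apply eventually_exists_ge; assumption | assumption].
Qed.
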